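(* Let $n\ge1$ and let $\varphi\colon A\to B$ be a Frobenius $n$-homomorphism. Then for every $a\in A$, $$\psi_n(a)=1+\psi_1(a-1)+\psi_2(a-1)+\dots+\psi_n(a-1),$$ i.e. $\psi_n(a)=\mathrm{ber}_\varphi(a)$.
   Context: $\mathbb{K}=\mathbb{R}$ or $\mathbb{C}$; $A$ and $B$ are commutative associative unital $\mathbb{K}$-algebras. For a $\mathbb{K}$-linear map $\varphi\colon A\to B$ and $a\in A$, the characteristic function is $R_\varphi(a,z)=\exp\bigl(\varphi(\ln(1+az))\bigr)=1+\sum_{k\ge1}\psi_k(a)z^k\in B[[z]]$, with $\ln(1+az)=\sum_{k\ge1}(-1)^{k+1}a^kz^k/k$ and $\varphi$ applied coefficientwise (so $\psi_1=\varphi$). The Frobenius maps $\Phi_k\colon A^k\to B$ of $\varphi$ are defined by $\Phi_1=\varphi$ and $\Phi_{k+1}(a_1,\dots,a_{k+1})=\varphi(a_1)\Phi_k(a_2,\dots,a_{k+1})-\sum_{j=2}^{k+1}\Phi_k(a_2,\dots,a_{j-1},a_1a_j,a_{j+1},\dots,a_{k+1})$. A linear map $\varphi$ is a (Frobenius) $n$-homomorphism if $\varphi(1)=n\cdot1_B$ and $\Phi_k\equiv0$ for all $k\ge n+1$. For such $\varphi$ the $\varphi$-Berezinian is $\mathrm{ber}_\varphi(a)=1+\sum_{k=1}^n\psi_k(a-1)$. *)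

From HB Require Import structures.
From mathcomp Require Import all_boot all_order all_algebra.
Set Implicit Arguments. Unset Strict Implicit. Unset Printing Implicit Defensive.
Import Order.TTheory GRing.Theory Num.Theory.
Local Open Scope ring_scope.

Section Frob.
Variables (K : numFieldType) (A B : comAlgType K) (phi : {linear A -> B}).

(* Frob k s = Phi_k(s_0, ..., s_{k-1}) for a sequence s of length k
   (Phi_0 is unused, set to 0). *)
Fixpoint Frob (k : nat) (s : seq A) : B :=
  match k with
  | 0 => 0
  | k'.+1 =>
    match k' with
    | 0 => phi (nth 0 s 0)
    | _ => phi (nth 0 s 0) * Frob k' (behead s)
           - \sum_(j < k') Frob k' (set_nth 0 (behead s) j
                                     (nth 0 s 0 * nth 0 (behead s) j))
    end
  end.

Definition is_nhom (n : nat) : Prop :=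
  phi 1 = n%:R /\
  forall k : nat, (n.+1 <= k)%N -> forall s : seq A, size s = k -> Frob k s = 0.

Definition scB (c : K) : B := c%:A.

(* phi(ln(1 + a z)) truncated at degree N, as a polynomial in z over B *)
Definition logser (N : nat) (a : A) : {poly B} :=
  \sum_(1 <= i < N.+1)
     (scB ((-1) ^+ i.+1 / i%:R) * phi (a ^+ i))%:P * 'X^i.

(* psi_k(a) = k-th coefficient of exp(phi(ln(1 + a z))); since logser has no
   constant term, only the terms of exp of order <= k and of logser of
   degree <= k contribute to that coefficient. *)
Definition psi (k : nat) (a : A) : B :=
  (\sum_(m < k.+1) (scB (m`!%:R)^-1)%:P * (logser k a) ^+ m)`_k.

Definition ber (n : nat) (a : A) : B :=
  1 + \sum_(1 <= k < n.+1) psi k (a - 1).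

End Frob.

(* Put w = z/(1+z), so that 1 + a z = (1 + z)(1 + (a-1) w).  Taking logarithms,
   applying phi and using phi(1) = n gives
     exp(phi(ln(1 + a z))) = (1 + z)^n * exp(phi(ln(1 + (a-1) w))),
   and since [z^n] (1 + z)^n w^k = [z^n] z^k (1 + z)^(n-k) = 1 for k <= n, the
   coefficient of z^n on the right is psi_0(a-1) + ... + psi_n(a-1).  Only
   phi(1) = n is needed, not the vanishing of the Frobenius maps.  Everything is
   done with power series truncated at degree n: both sides of the identity
   solve F' = phi(ln(1 + a z))' F with F(0) = 1, whose solution is unique in
   characteristic 0. *)

From Stdlib Require Import Setoid.
From HB Require Import structures.
From mathcomp Require Import all_boot all_order all_algebra ring.
Set Implicit Arguments. Unset Strict Implicit. Unset Printing Implicit Defensive.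
Import Order.TTheory GRing.Theory Num.Theory.
Local Open Scope ring_scope.

Lemma sub1rX (R : pzRingType) (x : R) n :
  1 - x ^+ n = (1 - x) * \sum_(i < n) x ^+ i.
Proof. by rewrite -opprB subrX1 -mulNr opprB. Qed.

Definition eqmodX (R : comNzRingType) (M : nat) (p q : {poly R}) :=
  exists r, p - q = r * 'X^(M.+1).

Section TruncatedEquality.
Variable R : comNzRingType.
Implicit Types (p q r : {poly R}) (M : nat).

Lemma eqmodXP M p q : eqmodX M p q <-> forall i, (i <= M)%N -> p`_i = q`_i.
Proof.
split=> [[r pq] i le_iM|pq].
  by apply/eqP; rewrite -subr_eq0 -coefB pq coefMXn ltnS le_iM.
exists (drop_poly M.+1 (p - q)); rewrite -[LHS](poly_take_drop M.+1).
suff -> : take_poly M.+1 (p - q) = 0 by rewrite add0r.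
apply/polyP=> i; rewrite coef_take_poly coef0 coefB ltnS.
by case: leqP => // /pq ->; rewrite subrr.
Qed.

Lemma eqmodX_refl M : Reflexive (@eqmodX R M).
Proof. by move=> p; exists 0; rewrite subrr mul0r. Qed.

Lemma eqmodX_sym M : Symmetric (@eqmodX R M).
Proof. by move=> p q [r pq]; exists (- r); rewrite mulNr -pq opprB. Qed.

Lemma eqmodX_trans M : Transitive (@eqmodX R M).
Proof.
by move=> p q s [r pq] [r' qs]; exists (r + r'); rewrite mulrDl -pq -qs addrA subrK.
Qed.

End TruncatedEquality.

Add Parametric Relation (R : comNzRingType) M : {poly R} (@eqmodX R M)
  reflexivity proved by (@eqmodX_refl R M)
  symmetry proved by (@eqmodX_sym R M)
  transitivity proved by (@eqmodX_trans R M) as eqmodX_rel.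

#[global] Hint Extern 0 (eqmodX _ _ _) => reflexivity : core.

Add Parametric Morphism (R : comNzRingType) M : (@GRing.add {poly R})
  with signature (@eqmodX R M) ==> (@eqmodX R M) ==> (@eqmodX R M) as eqmodX_add.
Proof.
move=> p p' [r pp'] q q' [r' qq']; exists (r + r').
by rewrite mulrDl -pp' -qq' opprD addrACA.
Qed.

Add Parametric Morphism (R : comNzRingType) M : (@GRing.opp {poly R})
  with signature (@eqmodX R M) ==> (@eqmodX R M) as eqmodX_opp.
Proof. by move=> p p' [r pp']; exists (- r); rewrite mulNr -pp' opprD. Qed.

Add Parametric Morphism (R : comNzRingType) M : (@GRing.mul {poly R})
  with signature (@eqmodX R M) ==> (@eqmodX R M) ==> (@eqmodX R M) as eqmodX_mul.
Proof.
move=> p p' [r pp'] q q' [r' qq']; exists (r * q + p' * r').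
rewrite mulrDl mulrAC -pp' -mulrA -qq' mulrBl mulrBr.
by rewrite addrA subrK.
Qed.

Add Parametric Morphism (R : comNzRingType) M : (@GRing.exp {poly R})
  with signature (@eqmodX R M) ==> (@eq nat) ==> (@eqmodX R M) as eqmodX_exp.
Proof. by move=> p q pq; elim=> [|k IHk]; rewrite ?expr0 // !exprS IHk pq. Qed.

Section TruncatedEqualityTheory.
Variable R : comNzRingType.
Implicit Types (p q r W : {poly R}) (M : nat).

Lemma eqmodX_le M' M p q : (M' <= M)%N -> eqmodX M p q -> eqmodX M' p q.
Proof.
by move=> le_M'M /eqmodXP pq; apply/eqmodXP => i le_iM'; apply/pq/(leq_trans le_iM').
Qed.

Lemma eqmodX_sum M I (s : seq I) (P : pred I) (F G : I -> {poly R}) :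
  (forall i, P i -> eqmodX M (F i) (G i)) ->
  eqmodX M (\sum_(i <- s | P i) F i) (\sum_(i <- s | P i) G i).
Proof.
move=> FG; elim/big_rec2: _ => // i p q Pi pq.
by rewrite pq FG.
Qed.

Lemma eqmodX_mulXn M k p : (M < k)%N -> eqmodX M (p * 'X^k) 0.
Proof.
by move=> lt_Mk; exists (p * 'X^(k - M.+1)); rewrite subr0 -mulrA -exprD subnK.
Qed.

Lemma coef0_eq0_mulX p : p`_0 = 0 -> exists q, p = q * 'X.
Proof.
move=> p0; have [q] : eqmodX 0 p 0 by apply/eqmodXP => -[|] // _; rewrite p0 coef0.
by rewrite subr0 expr1; exists q.
Qed.

Lemma eqmodX_exp_eq0 M k p : p`_0 = 0 -> (M < k)%N -> eqmodX M (p ^+ k) 0.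
Proof. by move=> /coef0_eq0_mulX [q ->] lt_Mk; rewrite exprMn eqmodX_mulXn. Qed.

Lemma eqmodX_comp M W p q :
  W`_0 = 0 -> eqmodX M p q -> eqmodX M (p \Po W) (q \Po W).
Proof.
move=> /coef0_eq0_mulX [V ->] [r pq]; exists ((r \Po V * 'X) * V ^+ M.+1).
by rewrite -comp_polyB pq comp_polyM comp_Xn_poly exprMn mulrA.
Qed.

Lemma coef0_comp W p : W`_0 = 0 -> (p \Po W)`_0 = p`_0.
Proof.
move=> W0; have /eqmodXP -> // : eqmodX 0 (p \Po W) ((p`_0)%:P \Po W).
  by apply/eqmodX_comp/eqmodXP => // -[|] //; rewrite coefC.
by rewrite comp_polyC coefC.
Qed.

Lemma eqmodX_deriv M p q : eqmodX M.+1 p q -> eqmodX M p^`() q^`().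
Proof. by move/eqmodXP=> pq; apply/eqmodXP => i le_iM; rewrite !coef_deriv pq. Qed.

Lemma eqmodX_cancel M c p q :
  eqmodX M ((1 + c%:P * 'X) * p) ((1 + c%:P * 'X) * q) -> eqmodX M p q.
Proof.
set x := - (c%:P * 'X); have -> : 1 + c%:P * 'X = 1 - x by rewrite opprK.
pose v := \sum_(i < M.+1) x ^+ i.
have vK : eqmodX M (v * (1 - x)) 1.
  rewrite mulrC /v -sub1rX (@eqmodX_exp_eq0 M M.+1) ?subr0 //.
  by rewrite coefN coefCM coefX mulr0 oppr0.
by move=> xpq; rewrite -[p]mul1r -[q]mul1r -vK -!mulrA xpq.
Qed.

Section NatRegular.
Hypothesis natr_reg : forall (x : R) n, x *+ n.+1 = 0 -> x = 0.

Lemma eqmodX_integrate M p q :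
  p`_0 = q`_0 -> eqmodX M p^`() q^`() -> eqmodX M.+1 p q.
Proof.
move=> pq0 /eqmodXP dpq; apply/eqmodXP => -[//|i] le_iM.
apply/eqP; rewrite -subr_eq0; apply/eqP/(@natr_reg _ i).
by rewrite mulrnBl -!coef_deriv dpq ?subrr.
Qed.

Lemma eqmodX_ode M P p q : p`_0 = q`_0 ->
  eqmodX M p^`() (P * p) -> eqmodX M q^`() (P * q) -> eqmodX M.+1 p q.
Proof.
move=> pq0 dp dq; suff: forall k, (k <= M.+1)%N -> eqmodX k p q by apply.
elim=> [|k IHk] lt_kM; first by apply/eqmodXP => -[|].
have le_kM : (k <= M)%N := lt_kM.
apply: eqmodX_integrate => //.
by rewrite (eqmodX_le le_kM dp) (eqmodX_le le_kM dq) (IHk (ltnW lt_kM)).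
Qed.

End NatRegular.

Definition Xdiv1X N : {poly R} := 'X * \sum_(i < N) (- 'X) ^+ i.

Lemma coef0_Xdiv1X N : (Xdiv1X N)`_0 = 0.
Proof. by rewrite coefXM. Qed.

Lemma mul1X_Xdiv1X N : eqmodX N ((1 + 'X) * Xdiv1X N) 'X.
Proof.
have -> : 1 + 'X = 1 - (- 'X : {poly R}) by rewrite opprK.
rewrite /Xdiv1X mulrCA -sub1rX mulrBr mulr1 -mulNr -exprS.
by rewrite (@eqmodX_exp_eq0 N N.+1) ?addr0 // coefN coefX oppr0.
Qed.

Lemma deriv_mul1X_Xdiv1X m : eqmodX m (Xdiv1X m.+1 + (1 + 'X) * (Xdiv1X m.+1)^`()) 1.
Proof.
have := eqmodX_deriv (mul1X_Xdiv1X m.+1).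
by rewrite derivM derivD derivX -polyC1 derivC add0r mul1r.
Qed.

Lemma coef_exp1X k : ((1 + 'X : {poly R}) ^+ k)`_k = 1.
Proof.
have -> : 1 + 'X = 'X - (-1)%:P :> {poly R} by rewrite polyCN opprK polyC1 addrC.
have /monicP := monic_exp k (monicXsubC (-1 : R)).
by rewrite /lead_coef size_exp_XsubC.
Qed.

Lemma coef_comp_Xdiv1X N G :
  ((1 + 'X) ^+ N * (G \Po Xdiv1X N))`_N = \sum_(i < N.+1) G`_i.
Proof.
have GT : eqmodX N G (\poly_(i < N.+1) G`_i).
  by apply/eqmodXP => i le_iN; rewrite coef_poly ltnS le_iN.
have : eqmodX N ((1 + 'X) ^+ N * (G \Po Xdiv1X N))
                (\sum_(i < N.+1) (G`_i)%:P * ((1 + 'X) ^+ (N - i) * 'X ^+ i)).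
  rewrite (eqmodX_comp (coef0_Xdiv1X N) GT) poly_def raddf_sum /= mulr_sumr.
  apply: eqmodX_sum => i _; have le_iN : (i <= N)%N by rewrite -ltnS.
  have -> : (1 + 'X) ^+ N = (1 + 'X) ^+ (N - i) * (1 + 'X) ^+ i :> {poly R}.
    by rewrite -exprD subnK.
  rewrite comp_polyZ comp_Xn_poly -mul_polyC mulrCA -mulrA -exprMn.
  by rewrite mul1X_Xdiv1X.
move/eqmodXP => -> //; rewrite coef_sum; apply: eq_bigr => i _.
have le_iN : (i <= N)%N by rewrite -ltnS.
by rewrite coefCM coefMXn ltnNge le_iN /= coef_exp1X mulr1.
Qed.

(* [a/(1 + aX)], the derivative of [ln(1 + aX)], truncated at degree [N - 1] *)
Definition logder N (a : R) : {poly R} := a%:P * \sum_(i < N) (- (a%:P * 'X)) ^+ i.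

Lemma mul1aX_logder m a : eqmodX m ((1 + a%:P * 'X) * logder m.+1 a) a%:P.
Proof.
have -> : 1 + a%:P * 'X = 1 - (- (a%:P * 'X)) by rewrite opprK.
rewrite /logder mulrCA -sub1rX (@eqmodX_exp_eq0 m m.+1) ?subr0 ?mulr1 //.
by rewrite coefN coefCM coefX mulr0 oppr0.
Qed.

Lemma logder_shift m a :
  eqmodX m ((1 + 'X) * logder m.+1 a)
    (1 + (1 + 'X) * ((logder m.+1 (a - 1) \Po Xdiv1X m.+1) * (Xdiv1X m.+1)^`())).
Proof.
set W := Xdiv1X m.+1; set b := a - 1; set D := logder m.+1 b.
have ab : a%:P = 1 + b%:P by rewrite /b polyCB polyC1 addrC subrK.
have uW : eqmodX m (1 + a%:P * 'X) ((1 + 'X) * (1 + b%:P * W)).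
  have -> : (1 + 'X) * (1 + b%:P * W) = 1 + 'X + b%:P * ((1 + 'X) * W) by ring.
  by rewrite (eqmodX_le (leqnSn m) (mul1X_Xdiv1X m.+1)) ab mulrDl mul1r addrA.
have bD : eqmodX m ((1 + b%:P * W) * (D \Po W)) b%:P.
  have := eqmodX_comp (coef0_Xdiv1X m.+1) (mul1aX_logder m b).
  by rewrite comp_polyM comp_polyD comp_polyM -polyC1 !comp_polyC comp_polyX.
apply: (@eqmodX_cancel m a); rewrite mulrCA mul1aX_logder uW.
have -> : (1 + 'X) * (1 + b%:P * W) * (1 + (1 + 'X) * ((D \Po W) * W^`())) =
    (1 + 'X) * (1 + b%:P * W + (1 + 'X) * ((1 + b%:P * W) * (D \Po W)) * W^`()).
  by ring.
rewrite bD.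
have -> : 1 + b%:P * W + (1 + 'X) * b%:P * W^`() = 1 + b%:P * (W + (1 + 'X) * W^`()).
  by ring.
by rewrite deriv_mul1X_Xdiv1X mulr1 ab.
Qed.

End TruncatedEqualityTheory.

Lemma eqmodX_map (R S : comNzRingType) (f : {additive R -> S}) M p q :
  eqmodX M p q -> eqmodX M (map_poly f p) (map_poly f q).
Proof. by move/eqmodXP=> pq; apply/eqmodXP => i le_iM; rewrite !coef_map pq. Qed.

Lemma map_Xdiv1X (R S : comNzRingType) (f : {rmorphism R -> S}) N :
  map_poly f (Xdiv1X R N) = Xdiv1X S N.
Proof.
rewrite /Xdiv1X rmorphM rmorph_sum /= map_polyX; congr (_ * _).
by apply: eq_bigr => i _; rewrite rmorphXn rmorphN /= map_polyX.
Qed.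

Section TruncatedExp.
Variables (K : numFieldType) (B : comAlgType K).
Implicit Types (L : {poly B}) (N : nat).

Lemma mulrSn_eq0 (x : B) n : x *+ n.+1 = 0 -> x = 0.
Proof.
move=> xn0; rewrite -[x]scale1r -(@mulVf _ n.+1%:R) ?pnatr_eq0 //.
by rewrite -scalerA scaler_nat xn0 scaler0.
Qed.

Definition exp_trunc N L : {poly B} :=
  \sum_(m < N.+1) (scB B (m`!%:R)^-1)%:P * L ^+ m.

Lemma deriv_exp_trunc N L : (exp_trunc N.+1 L)^`() = L^`() * exp_trunc N L.
Proof.
rewrite /exp_trunc raddf_sum big_ord_recl /= expr0 -polyC1 -polyCM derivC add0r.
rewrite mulr_sumr; apply: eq_bigr => i _.
rewrite deriv_mulC deriv_exp /= mulrnAr -mulrnAl -polyCMn mulrCA.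
congr (_ * (_%:P * _)); rewrite /scB scalerMnl; congr (_ *: _).
by rewrite factS natrM invfM -mulr_natr mulrAC mulVf ?mul1r ?pnatr_eq0.
Qed.

Lemma exp_trunc_ode N L :
  L`_0 = 0 -> eqmodX N (exp_trunc N.+1 L)^`() (L^`() * exp_trunc N.+1 L).
Proof.
move=> L0; rewrite deriv_exp_trunc [exp_trunc N.+1 L]/exp_trunc big_ord_recr /=.
by rewrite (@eqmodX_exp_eq0 _ N N.+1 L) // mulr0 addr0.
Qed.

Lemma exp_trunc_le k N L :
  L`_0 = 0 -> (k <= N)%N -> eqmodX k (exp_trunc N L) (exp_trunc k L).
Proof.
move=> L0; elim: N => [|N IHN]; first by rewrite leqn0 => /eqP ->.
rewrite leq_eqVlt => /predU1P[-> //|lt_kN].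
rewrite /exp_trunc big_ord_recr /= -/(exp_trunc N L) (eqmodX_exp_eq0 L0 lt_kN).
by rewrite mulr0 addr0 IHN.
Qed.

Lemma coef0_exp_trunc N L : L`_0 = 0 -> (exp_trunc N L)`_0 = 1.
Proof.
move=> L0; have /eqmodXP -> // := exp_trunc_le L0 (leq0n N).
by rewrite /exp_trunc big_ord1 expr0 mulr1 fact0 invr1 /scB scale1r coef1.
Qed.

Lemma eqmodX_exp_trunc k N L L' :
  eqmodX k L L' -> eqmodX k (exp_trunc N L) (exp_trunc N L').
Proof. by move=> LL'; apply: eqmodX_sum => i _; rewrite LL'. Qed.

End TruncatedExp.

Section LogarithmSeries.
Variables (K : numFieldType) (A B : comAlgType K) (phi : {linear A -> B}).
Implicit Types (a : A) (N : nat).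

Lemma coef0_logser N a : (logser phi N a)`_0 = 0.
Proof.
rewrite /logser coef_sum big_nat_cond big1 // => i /andP[/andP[lt0i _] _].
by rewrite coefMXn lt0i.
Qed.

Lemma logser_le k N a : (k <= N)%N -> eqmodX k (logser phi N a) (logser phi k a).
Proof.
move=> le_kN; rewrite /logser (@big_cat_nat _ _ _ k.+1) //=.
rewrite [X in _ + X]big_nat_cond [X in _ + X](eqmodX_sum _ (G := fun _ => 0)).
  by rewrite big1_eq addr0.
by move=> i /andP[/andP[lt_ki _] _]; rewrite eqmodX_mulXn.
Qed.

Lemma deriv_logser N a : (logser phi N a)^`() = map_poly phi (logder N a).
Proof.
have mapCXn (c : A) i : map_poly phi (c%:P * 'X^i) = (phi c)%:P * 'X^i.
  apply/polyP => j; rewrite coef_map /= !coefCM !coefXn.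
  by case: eqP; rewrite ?mulr1 ?mulr0 ?raddf0.
rewrite /logser /logder raddf_sum big_add1 big_mkord mulr_sumr raddf_sum /=.
apply: eq_bigr => i _.
rewrite -mulNr -polyCN exprMn -polyC_exp mulrA -polyCM mapCXn deriv_mulC derivXn /=.
rewrite mulrnAr -mulrnAl -polyCMn; congr (_%:P * _).
rewrite -scaleN1r exprZn -scalerAr -exprS linearZ /= /scB mulr_algl scalerMnl.
congr (_ *: _); rewrite -mulr_natr mulfVK ?pnatr_eq0 //.
by rewrite !exprS !mulN1r opprK.
Qed.

Lemma map_poly_alg_mul (s : {poly K}) (p : {poly A}) :
  map_poly phi (map_poly (in_alg A) s * p) = map_poly (in_alg B) s * map_poly phi p.
Proof.
apply/polyP=> i; rewrite coef_map /= !coefM raddf_sum; apply: eq_bigr => j _.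
by rewrite !coef_map /= !mulr_algl linearZ.
Qed.

Lemma map_poly_comp_alg (s : {poly K}) (p : {poly A}) :
  map_poly phi (p \Po map_poly (in_alg A) s) = map_poly phi p \Po map_poly (in_alg B) s.
Proof.
have mapMX (q : {poly A}) : map_poly phi (q * 'X) = map_poly phi q * 'X.
  by rewrite mulrC -(map_polyX (in_alg A)) map_poly_alg_mul map_polyX mulrC.
elim/poly_ind: p => [|p c IHp]; first by rewrite comp_poly0 raddf0 comp_poly0.
rewrite comp_poly_MXaddC !raddfD /= !map_polyC mapMX comp_polyC comp_polyM comp_polyX.
by rewrite -IHp mulrC map_poly_alg_mul mulrC.
Qed.

Lemma deriv_logser_shift m a : phi 1 = m.+1%:R ->
  eqmodX m ((1 + 'X) * (logser phi m.+1 a)^`())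
    (m.+1%:R + (1 + 'X) *
       (((logser phi m.+1 (a - 1))^`() \Po Xdiv1X B m.+1) * (Xdiv1X B m.+1)^`())).
Proof.
move=> phi1; rewrite !deriv_logser.
have alg1X (C : comAlgType K) : map_poly (in_alg C) (1 + 'X) = 1 + 'X.
  by rewrite rmorphD rmorph1 /= map_polyX.
have algW (C : comAlgType K) : map_poly (in_alg C) (Xdiv1X K m.+1) = Xdiv1X C m.+1.
  exact: map_Xdiv1X.
have map1 : map_poly phi 1 = m.+1%:R by rewrite -polyC1 map_polyC /= phi1 polyC_natr.
rewrite -[in X in eqmodX _ X _](alg1X B) -map_poly_alg_mul.
rewrite -[in X in eqmodX _ _ X](alg1X B) -!(algW B) deriv_map -map_poly_comp_alg.
rewrite [map_poly phi _ * _]mulrC -!map_poly_alg_mul -map1 -raddfD; apply: eqmodX_map.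
by rewrite -deriv_map !alg1X !algW [_^`() * _]mulrC; apply: logder_shift.
Qed.

Lemma exp_logser_shift m a : phi 1 = m.+1%:R ->
  eqmodX m.+1
    ((1 + 'X) ^+ m.+1 * (exp_trunc m.+1 (logser phi m.+1 (a - 1)) \Po Xdiv1X B m.+1))
    (exp_trunc m.+1 (logser phi m.+1 a)).
Proof.
move=> phi1; set La := logser phi m.+1 a; set Lb := logser phi m.+1 (a - 1).
set G := exp_trunc m.+1 Lb; set W := Xdiv1X B m.+1.
have La0 := coef0_logser m.+1 a; have Lb0 := coef0_logser m.+1 (a - 1).
have W0 : W`_0 = 0 := coef0_Xdiv1X B m.+1.
apply: (eqmodX_ode (@mulrSn_eq0 _ B) (P := La^`())); last exact: exp_trunc_ode.
  rewrite coef0M coef0_comp // !coef0_exp_trunc //.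
  by rewrite -horner_coef0 horner_exp !hornerE expr1n.
have dG : eqmodX m (G^`() \Po W) ((Lb^`() \Po W) * (G \Po W)).
  by rewrite -comp_polyM; apply/eqmodX_comp/exp_trunc_ode.
have d1X : (1 + 'X : {poly B})^`() = 1 by rewrite derivD derivX -polyC1 derivC add0r.
rewrite derivM deriv_exp deriv_comp d1X mul1r dG /= -mulr_natr exprS.
have -> : (1 + 'X) ^+ m * m.+1%:R * (G \Po W) +
    (1 + 'X) * (1 + 'X) ^+ m * ((Lb^`() \Po W) * (G \Po W) * W^`()) =
    (1 + 'X) ^+ m * (G \Po W) * (m.+1%:R + (1 + 'X) * ((Lb^`() \Po W) * W^`())).
  by ring.
rewrite -deriv_logser_shift // -/La.
suff -> : (1 + 'X) ^+ m * (G \Po W) * ((1 + 'X) * La^`()) =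
    La^`() * ((1 + 'X) * (1 + 'X) ^+ m * (G \Po W)) by [].
by ring.
Qed.

Lemma coef_exp_logser j N b :
  (j <= N)%N -> (exp_trunc N (logser phi N b))`_j = psi phi j b.
Proof.
move=> le_jN; have /eqmodXP -> // := exp_trunc_le (coef0_logser N b) le_jN.
by have /eqmodXP -> // := eqmodX_exp_trunc j (logser_le b le_jN).
Qed.

End LogarithmSeries.

Unset Implicit Arguments.

Theorem mainTheorem6 (K : numFieldType) (A B : comAlgType K)
  (phi : {linear A -> B}) (n : nat) :
  (1 <= n)%N -> is_nhom phi n ->
  forall a : A,
    psi phi n a = 1 + \sum_(1 <= k < n.+1) psi phi k (a - 1).
Proof.
case: n => [//|m] _ [phi1 _] a.
have -> : psi phi m.+1 a = (exp_trunc m.+1 (logser phi m.+1 a))`_m.+1 by [].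
have /eqmodXP <- // := exp_logser_shift a phi1.
rewrite coef_comp_Xdiv1X big_ord_recl coef0_exp_trunc ?coef0_logser //.
rewrite big_add1 big_mkord; congr (1 + _); apply: eq_bigr => i _.
by rewrite lift0 coef_exp_logser // ltn_ord.
Qed.
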